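(* Let $A$ be a quasi-quantale with top $1$ and bottom $0$, and let $B$ be a subquasi-quantale of $A$ with $0,1\in B$ and $1b\leq b$, $b1\leq b$ for all $b\in B$. Endow $Spec_B(A)$ with the topology whose open sets are $\mathcal{U}(b)=\{p\in Spec_B(A)\mid b\nleq p\}$, $b\in B$, let $\mathcal{O}(Spec_B(A))$ be its frame of open sets, and define $\mathcal{U}_*\colon\mathcal{O}(Spec_B(A))\to B$ by $\mathcal{U}_*(W)=\bigvee\{b\in B\mid \mathcal{U}(b)\subseteq W\}$. Then the closure operator $\mu=\mathcal{U}_*\circ\mathcal{U}\colon B\to B$ is a multiplicative pre-nucleus: for all $a,b\in B$, $\mu(ab)=\mu(a)\wedge\mu(b)$ and $\mu(a\sqcap b)=\mu(a)\wedge\mu(b)$, where $\sqcap$ denotes the meet in the complete lattice $B$.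
   Context: A quasi-quantale is a complete lattice $A$ equipped with an associative binary operation $(a,b)\mapsto ab$ such that for every directed subset $X\subseteq A$ (non-empty, and any two elements of $X$ have an upper bound in $X$) and every $a\in A$: $(\bigvee X)a=\bigvee\{xa\mid x\in X\}$ and $a(\bigvee X)=\bigvee\{ax\mid x\in X\}$. A subquasi-quantale of $A$ is a subset $B\subseteq A$ closed under arbitrary joins of $A$ and under the product. An element $p\in A$ is prime relative to $B$ if $p\neq 1$ and whenever $a,b\in B$ with $ab\leq p$, then $a\leq p$ or $b\leq p$. $Spec_B(A)$ is the set of elements of $A$ prime relative to $B$. *)

Set Implicit Arguments.

Definition directed (A : Type) (le : A -> A -> Prop) (X : A -> Prop) : Prop :=
  (exists x, X x) /\
  (forall x y, X x -> X y -> exists z, X z /\ le x z /\ le y z).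

Record quasi_quantale := QuasiQuantale {
  car :> Type;
  le : car -> car -> Prop;
  sup : (car -> Prop) -> car;
  mul : car -> car -> car;
  le_refl : forall x, le x x;
  le_trans : forall x y z, le x y -> le y z -> le x z;
  le_antisym : forall x y, le x y -> le y x -> x = y;
  sup_ub : forall (X : car -> Prop) x, X x -> le x (sup X);
  sup_least : forall (X : car -> Prop) y, (forall x, X x -> le x y) -> le (sup X) y;
  mul_assoc : forall x y z, mul (mul x y) z = mul x (mul y z);
  mul_sup_dir_l : forall (X : car -> Prop) a, directed le X ->
      mul (sup X) a = sup (fun y => exists x, X x /\ y = mul x a);
  mul_sup_dir_r : forall (X : car -> Prop) a, directed le X ->
      mul a (sup X) = sup (fun y => exists x, X x /\ y = mul a x)
}.

Arguments le {q} _ _.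
Arguments sup {q} _.
Arguments mul {q} _ _.

Section QQ.
Variable A : quasi_quantale.

Definition top : car A := sup (fun _ : car A => True).
Definition bot : car A := sup (fun _ : car A => False).

Definition subquasi_quantale (B : car A -> Prop) : Prop :=
  (forall X : A -> Prop, (forall x, X x -> B x) -> B (sup X)) /\
  (forall a b, B a -> B b -> B (mul a b)).

Definition primeB (B : car A -> Prop) (p : car A) : Prop :=
  p <> top /\
  forall a b, B a -> B b -> le (mul a b) p -> le a p \/ le b p.

Definition SpecB (B : car A -> Prop) : car A -> Prop := primeB B.

Definition U (B : car A -> Prop) (b : car A) : car A -> Prop :=
  fun p => SpecB B p /\ ~ le b p.

Definition is_open (B : car A -> Prop) (W : car A -> Prop) : Prop :=
  exists b, B b /\ forall p, W p <-> U B b p.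

Definition U_star (B : car A -> Prop) (W : car A -> Prop) : car A :=
  sup (fun b => B b /\ forall p, U B b p -> W p).

Definition mu (B : car A -> Prop) (b : car A) : car A := U_star B (U B b).

(* meet in the complete lattice B (whose joins are those of A) *)
Definition meetB (B : car A -> Prop) (a b : car A) : car A :=
  sup (fun c => B c /\ le c a /\ le c b).

End QQ.

Arguments top {A}.
Arguments bot {A}.
Arguments subquasi_quantale {A} B.
Arguments primeB {A} B p.
Arguments SpecB {A} B _.
Arguments U {A} B b _.
Arguments is_open {A} B W.
Arguments U_star {A} B W.
Arguments mu {A} B b.
Arguments meetB {A} B a b.

(* The open set U(x) only records which primes lie above x, and mu x is the
   largest element of B lying below every prime above x.  Hence
   mu x = mu a /\ mu b as soon as x lies below a and b and every prime above x
   lies above a or b.  Absorption of the top element gives ab <= a and ab <= b,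
   and primality gives the prime condition for x = ab; it then also holds for
   the meet of a and b in B, which lies above ab. *)
From Stdlib Require Import Classical.

Arguments le_trans {q x y z} _ _.

Section QuasiQuantaleOrder.
Context {A : quasi_quantale}.

Lemma le_top (x : car A) : le x top.
Proof. apply sup_ub. exact I. Qed.

Lemma sup_pair_le (x y : car A) : le x y -> sup (fun z => z = x \/ z = y) = y.
Proof.
  intro Hxy. apply le_antisym.
  - apply sup_least. intros z [-> | ->]; [exact Hxy | apply le_refl].
  - apply sup_ub. now right.
Qed.

Lemma directed_pair_le (x y : car A) : le x y -> directed le (fun z => z = x \/ z = y).
Proof.
  intro Hxy. split; [now exists x; left |].
  intros u v Hu Hv. exists y. split; [now right |].
  destruct Hu as [-> | ->], Hv as [-> | ->]; auto using le_refl.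
Qed.

(* Monotonicity is the directed-join law applied to the directed pair {x, y}. *)
Lemma mul_le_l {x y : car A} (a : car A) : le x y -> le (mul x a) (mul y a).
Proof.
  intro Hxy. rewrite <- (sup_pair_le x y Hxy), mul_sup_dir_l by now apply directed_pair_le.
  apply sup_ub. exists x. split; [now left | reflexivity].
Qed.

Lemma mul_le_r {x y : car A} (a : car A) : le x y -> le (mul a x) (mul a y).
Proof.
  intro Hxy. rewrite <- (sup_pair_le x y Hxy), mul_sup_dir_r by now apply directed_pair_le.
  apply sup_ub. exists x. split; [now left | reflexivity].
Qed.

End QuasiQuantaleOrder.

Section SpectralClosure.
Context {A : quasi_quantale} {B : car A -> Prop}.
Hypothesis B_sup : forall X : A -> Prop, (forall x, X x -> B x) -> B (sup X).

Lemma mu_in (b : car A) : B (mu B b).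
Proof. apply B_sup. now intros c [Hc _]. Qed.

Lemma meetB_in (a b : car A) : B (meetB B a b).
Proof. apply B_sup. now intros c [Hc _]. Qed.

Lemma meetB_le_l (a b : car A) : le (meetB B a b) a.
Proof. apply sup_least. now intros c (_ & Hca & _). Qed.

Lemma meetB_le_r (a b : car A) : le (meetB B a b) b.
Proof. apply sup_least. now intros c (_ & _ & Hcb). Qed.

Lemma meetB_greatest (a b c : car A) : B c -> le c a -> le c b -> le c (meetB B a b).
Proof. intros Hc Hca Hcb. now apply sup_ub. Qed.

Lemma mu_le_prime {b p : car A} : SpecB B p -> le b p -> le (mu B b) p.
Proof.
  intros Hp Hbp. apply sup_least. intros c [_ HU].
  apply NNPP. intro Hcp. now apply (HU p (conj Hp Hcp)).
Qed.

Lemma le_mu (b c : car A) : B c -> (forall p, SpecB B p -> le b p -> le c p) ->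
  le c (mu B b).
Proof.
  intros Hc Hprimes. apply sup_ub. split; [exact Hc |].
  intros p [Hp Hcp]. split; [exact Hp |]. intro Hbp. exact (Hcp (Hprimes p Hp Hbp)).
Qed.

Lemma mu_mono (a b : car A) : le a b -> le (mu B a) (mu B b).
Proof.
  intro Hab. apply sup_least. intros c [Hc HU]. apply sup_ub. split; [exact Hc |].
  intros p HUp. destruct (HU p HUp) as [Hp Hap].
  split; [exact Hp |]. intro Hbp. exact (Hap (le_trans Hab Hbp)).
Qed.

Lemma mu_eq_meetB (x a b : car A) : B x -> le x a -> le x b ->
  (forall p, SpecB B p -> le x p -> le a p \/ le b p) ->
  mu B x = meetB B (mu B a) (mu B b).
Proof.
  intros Hx Hxa Hxb Hsplit. apply le_antisym.
  - apply meetB_greatest; [apply mu_in | now apply mu_mono ..].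
  - apply le_mu; [apply meetB_in |].
    intros p Hp Hxp. destruct (Hsplit p Hp Hxp) as [Hap | Hbp].
    + exact (le_trans (meetB_le_l _ _) (mu_le_prime Hp Hap)).
    + exact (le_trans (meetB_le_r _ _) (mu_le_prime Hp Hbp)).
Qed.

End SpectralClosure.

Theorem theorem3p21 (A : quasi_quantale) (B : car A -> Prop) :
  subquasi_quantale B ->
  B (@bot A) -> B (@top A) ->
  (forall b, B b -> le (mul (@top A) b) b) ->
  (forall b, B b -> le (mul b (@top A)) b) ->
  forall a b, B a -> B b ->
    mu B (mul a b) = meetB B (mu B a) (mu B b) /\
    mu B (meetB B a b) = meetB B (mu B a) (mu B b).
Proof.
  intros [B_sup B_mul] _ _ top_mul mul_top a b Ha Hb.
  assert (Hab_a : le (mul a b) a) by exact (le_trans (mul_le_r a (le_top b)) (mul_top a Ha)).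
  assert (Hab_b : le (mul a b) b) by exact (le_trans (mul_le_l b (le_top a)) (top_mul b Hb)).
  assert (Hab_meet : le (mul a b) (meetB B a b))
    by (apply meetB_greatest; auto).
  assert (prime_split : forall p, SpecB B p -> le (mul a b) p -> le a p \/ le b p)
    by (intros p Hp; exact (proj2 Hp a b Ha Hb)).
  split.
  - apply mu_eq_meetB;
      [exact B_sup | now apply B_mul | exact Hab_a | exact Hab_b | exact prime_split].
  - apply mu_eq_meetB; [exact B_sup | exact (meetB_in B_sup a b)
      | apply meetB_le_l | apply meetB_le_r |].
    intros p Hp Hmp. exact (prime_split p Hp (le_trans Hab_meet Hmp)).
Qed.
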